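(* Let $(\mathfrak{A},\mathfrak{A}_0)$ be a CQ*-algebra as in the context, let $H=H^*\in\mathfrak{A}$ and $\omega\in E(\mathfrak{A}_0)$, and suppose $\overline{\omega}$ is a nondegenerate ground state of $H$ with eigenvalue $\alpha_*$. Then the following are equivalent: (i) $\overline{\omega}$ is a gapped ground state of $H$; (ii) there exists $\Delta>0$ such that $-i\,\overline{\omega}(A^*\delta_H(A))\ge\Delta\left(\omega(A^*A)-|\omega(A)|^2\right)$ for all $A\in\mathfrak{A}_0$.
   Context: Let $\mathfrak{A}_0$ be a unital C*-algebra with C*-norm $\|\cdot\|_0$ and unit $I$, and $\|\cdot\|$ another norm on $\mathfrak{A}_0$ with $\|A\|\le\|A\|_0$, $\|AB\|\le\|A\|\,\|B\|_0$, $\|A^*\|=\|A\|$. $\mathfrak{A}$ is the $\|\cdot\|$-completion of $\mathfrak{A}_0$, with $XA:=\lim A_nA$, $AX:=\lim AA_n$, $X^*:=\lim A_n^*$ for $X\in\mathfrak{A}$, $A\in\mathfrak{A}_0$, $A_n\in\mathfrak{A}_0$, $\|A_n-X\|\to0$. $E(\mathfrak{A}_0)$ is the set of positive linear functionals $\omega$ on $\mathfrak{A}_0$ with $\omega(I)=1$ and $|\omega(A)|\le\gamma\|A\|$ for some $\gamma>0$; $\overline{\omega}$ is its continuous extension to $\mathfrak{A}$. $(\pi_\omega,\lambda_\omega,\mathcal{H}_\omega)$ is the GNS construction of $\omega$ on $\mathfrak{A}_0$ ($\lambda_\omega$ linear with dense range, $(\lambda_\omega(A)|\lambda_\omega(B))=\omega(B^*A)$).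 For $X\in\mathfrak{A}$, $B\in\mathfrak{A}_0$, $\pi_{\overline{\omega}}(X)\lambda_\omega(B)$ is the conjugate-linear functional on $\lambda_\omega(\mathfrak{A}_0)$ given by $\langle\pi_{\overline{\omega}}(X)\lambda_\omega(B),\lambda_\omega(C)\rangle=\overline{\omega}(C^*XB)$; it is bounded if it extends continuously to $\mathcal{H}_\omega$, and then $[\cdot]$ denotes the representing vector. $\delta_H(A):=i(HA-AH)$ for $A\in\mathfrak{A}_0$; $\overline{\omega}(A^*HA)$ means $\overline{\omega}(A^*(HA))$. $\overline{\omega}$ is a ground state for $H$ with eigenvalue $\alpha_*$ if $\overline{\omega}(AH)=\alpha_*\overline{\omega}(A)$ for all $A\in\mathfrak{A}_0$ and $\langle\pi_{\overline{\omega}}(H)\lambda_\omega(B),\lambda_\omega(B)\rangle\ge\alpha_*(\lambda_\omega(B)|\lambda_\omega(B))$ for all $B\in\mathfrak{A}_0$. Let $\mathrm{Ker}(\pi_{\overline{\omega}}(H)-\alpha_*I)$ denote the set of vectors $\lambda_\omega(B)$, $B\in\mathfrak{A}_0$, such that $\pi_{\overline{\omega}}(H)\lambda_\omega(B)$ is bounded and $[\pi_{\overline{\omega}}(H)\lambda_\omega(B)]=\alpha_*\lambda_\omega(B)$. The ground state $\overline{\omega}$ is nondegenerate if $\mathrm{Ker}(\pi_{\overline{\omega}}(H)-\alpha_*I)=\mathbb{C}\lambda_\omega(I)$, and gapped if there is $\Delta>0$ such that $\overline{\omega}(A^*HA)\ge(\alpha_*+\Delta)\omega(A^*A)$ for all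 $A\in\mathfrak{A}_0$ with $\lambda_\omega(A)\in(\mathrm{Ker}(\pi_{\overline{\omega}}(H)-\alpha_*I))^\perp$. *)

From HB Require Import structures.
From mathcomp Require Import all_boot all_order all_algebra.
From mathcomp Require Import complex reals.
From Stdlib Require Import ClassicalEpsilon.
Set Implicit Arguments. Unset Strict Implicit. Unset Printing Implicit Defensive.
Import Order.TTheory GRing.Theory Num.Theory.
Local Open Scope ring_scope.
Local Open Scope complex_scope.

Section Defs.
Variable R : realType.

Definition is_norm (A : lmodType R[i]) (N : A -> R) : Prop :=
  [/\ forall x, 0 <= N x,
      forall x, N x = 0 -> x = 0,
      forall (c : R[i]) x, (N (c *: x))%:C = `|c| * (N x)%:C
    & forall x y, N (x + y) <= N x + N y].

Definition cauchy_seq (A : zmodType) (N : A -> R) (u : nat -> A) : Prop :=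
  forall e : R, 0 < e -> exists M, forall m n, (M <= m)%N -> (M <= n)%N ->
    N (u m - u n) < e.

Definition cvg_seq (A : zmodType) (N : A -> R) (u : nat -> A) (l : A) : Prop :=
  forall e : R, 0 < e -> exists M, forall n, (M <= n)%N -> N (u n - l) < e.

Definition complete_for (A : zmodType) (N : A -> R) : Prop :=
  forall u, cauchy_seq N u -> exists l, cvg_seq N u l.

Definition is_involution (A : algType R[i]) (s : A -> A) : Prop :=
  [/\ forall x, s (s x) = x,
      forall x y, s (x + y) = s x + s y,
      forall (c : R[i]) x, s (c *: x) = c^* *: s x
    & forall x y, s (x * y) = s y * s x].

Definition is_unital_Cstar (A : algType R[i]) (s : A -> A) (N0 : A -> R) : Prop :=
  [/\ is_involution s, is_norm N0,
      forall x y, N0 (x * y) <= N0 x * N0 y,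
      forall x, N0 (s x * x) = N0 x ^+ 2
    & complete_for N0].

(* The completion A of (A0, N) is represented by N-Cauchy sequences in A0. *)
Definition CQstar (A : algType R[i]) (s : A -> A) (N0 N : A -> R) : Prop :=
  [/\ is_unital_Cstar s N0, is_norm N,
      forall x, N x <= N0 x,
      forall x y, N (x * y) <= N x * N0 y
    & forall x, N (s x) = N x].

(* X in the completion, given by an N-Cauchy sequence Xs; X = X^* *)
Definition selfadj (A : algType R[i]) (s : A -> A) (N : A -> R) (Xs : nat -> A) :=
  cvg_seq N (fun n => s (Xs n) - Xs n) 0.

Definition ccvg (u : nat -> R[i]) (l : R[i]) : Prop :=
  forall e : R, 0 < e -> exists M, forall n, (M <= n)%N -> `|u n - l| < e%:C.

Definition clim (u : nat -> R[i]) : R[i] := epsilon (inhabits 0) (ccvg u).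

Definition obar (A : algType R[i]) (om : A -> R[i]) (Xs : nat -> A) : R[i] :=
  clim (fun n => om (Xs n)).

Definition in_E (A : algType R[i]) (s : A -> A) (N : A -> R) (om : A -> R[i]) :=
  [/\ forall (c : R[i]) x y, om (c *: x + y) = c * om x + om y,
      forall x, 0 <= om (s x * x),
      om 1 = 1
    & exists g : R, 0 < g /\ forall x, `|om x| <= (g * N x)%:C].

Definition deltaH (A : algType R[i]) (Hs : nat -> A) (X : A) : nat -> A :=
  fun n => 'i *: (Hs n * X - X * Hs n).

Section GNS.
Variables (A : algType R[i]) (s : A -> A) (om : A -> R[i]) (Hs : nat -> A) (a : R[i]).

Definition ground_state : Prop :=
  (forall X, obar om (fun n => X * Hs n) = a * om X) /\
  (forall B, a * om (s B * B) <= obar om (fun n => s B * Hs n * B)).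

(* lambda_om(B) = lambda_om(B') in the GNS space *)
Definition lam_eq (B B' : A) : Prop := om (s (B - B') * (B - B')) = 0.

(* pi(H) lambda(B) is bounded with representing vector a lambda(B), i.e.
   <pi(H)lambda(B), lambda(D)> = (a lambda(B) | lambda(D)) for all D *)
Definition in_ker (B : A) : Prop :=
  forall D, obar om (fun n => s D * Hs n * B) = a * om (s D * B).

(* the vector lambda(B) belongs to Ker(pi(H) - a I) *)
Definition vec_in_ker (B : A) : Prop := exists B', lam_eq B B' /\ in_ker B'.

(* Ker(pi(H) - a I) = C lambda(I) *)
Definition gs_nondegenerate : Prop :=
  forall B, vec_in_ker B <-> exists c : R[i], lam_eq B (c *: 1).

(* lambda(X) in Ker^perp *)
Definition in_ker_perp (X : A) : Prop :=
  forall B, vec_in_ker B -> om (s B * X) = 0.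

Definition gapped : Prop :=
  exists D : R, 0 < D /\ forall X, in_ker_perp X ->
    (a + D%:C) * om (s X * X) <= obar om (fun n => s X * (Hs n * X)).
End GNS.
End Defs.

(* Write L(X) = lim ω(X^* H_n X); the limit exists because
   |ω(P x Q)| <= γ ‖P‖₀ ‖x‖ ‖Q‖₀ turns the N-Cauchy sequence H_n into a Cauchy
   sequence of numbers. The ground-state equation gives ω(X H_n) → α ω(X), and
   H = H^* together with the hermiticity of ω gives ω(H_n X) → ᾱ ω(X); hence α is
   real and -i ω̄(X^* δ_H(X)) = L(X) - α ω(X^* X). By nondegeneracy the orthogonal
   complement of Ker(π(H) - α) consists of the λ(X) with ω(X) = 0, and it contains
   λ(Y) for Y = X - ω(X) I. As L(Y) - α ω(Y^* Y) = L(X) - α ω(X^* X) and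
   ω(Y^* Y) = ω(X^* X) - |ω(X)|², inequality (ii) for X is the gap inequality
   for Y. *)

From HB Require Import structures.
From mathcomp Require Import all_boot all_order all_algebra.
From mathcomp Require Import complex reals.
From mathcomp Require Import classical_sets topology normedtype.
From mathcomp Require Import ring lra.
From Stdlib Require Import ClassicalEpsilon.
Import Order.TTheory GRing.Theory Num.Theory numFieldNormedType.Exports.
Set Implicit Arguments. Unset Strict Implicit. Unset Printing Implicit Defensive.
Local Open Scope classical_set_scope.
Local Open Scope complex_scope.
Local Open Scope ring_scope.

(* The norm topology of a numFieldType K lives on the alias K^o; copying it to
   R[i] gives complex sequences the limit laws of mathcomp-analysis. *)
HB.instance Definition _ (R : rcfType) := PseudoMetricNormedZmod.copy R[i] R[i]^o.

Section ComplexLimits.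
Variable R : realType.
Implicit Types (u : nat -> R[i]) (l : R[i]).

Lemma cauchy_real_cvg (v : nat -> R) :
  (forall e : R, 0 < e -> exists M, forall m n, (M <= m)%N -> (M <= n)%N ->
     `|v m - v n| < e) ->
  exists r : R, v @ \oo --> r.
Proof.
move=> hv; exists (lim (v @ \oo)); apply: cauchy_cvg.
apply: cauchy_exP => e /hv [M hM]; exists (v M).
by exists M => // n /= hn; apply: hM.
Qed.

Lemma ccvgP u l : ccvg u l <-> u @ \oo --> l.
Proof.
split=> [hu | /cvgrPdist_lt hu e e0].
- apply/cvgrPdist_lt => eps eps0.
  have eps_real : eps = (complex.Re eps)%:C by rewrite RRe_real ?gtr0_real.
  have [M hM] : exists M, forall n, (M <= n)%N -> `|u n - l| < (complex.Re eps)%:C.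
    by apply: hu; rewrite -ltcR -eps_real.
  by exists M => // n /= /hM; rewrite distrC -eps_real.
- have /hu[M _ hM] : 0 < e%:C by rewrite ltcR.
  by exists M => n /hM; rewrite distrC.
Qed.

Lemma climE u l : u @ \oo --> l -> clim u = l.
Proof.
move=> hu; have /ccvgP hclim : ccvg u (clim u).
  exact: epsilon_spec (ex_intro _ l (proj2 (ccvgP u l) hu)).
exact: cvg_unique hclim hu.
Qed.

Lemma obarE (A : algType R[i]) (om : A -> R[i]) (Xs : nat -> A) l :
  (fun n => om (Xs n)) @ \oo --> l -> obar om Xs = l.
Proof. exact: climE. Qed.

Lemma cvg_conjC u l : u @ \oo --> l -> (fun n => (u n)^*) @ \oo --> l^*.
Proof.
move=> /ccvgP hu; apply/ccvgP => e /hu [M hM].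
by exists M => n /hM; rewrite -rmorphB normcJ.
Qed.

Lemma normr_real_complex (x : R) : `|x%:C| = `|x|%:C.
Proof. by rewrite normc_def /= expr0n /= addr0 sqrtr_sqr. Qed.

Lemma cvg_real_complex (v : nat -> R) (r : R) :
  v @ \oo --> r -> (fun n => (v n)%:C) @ \oo --> r%:C.
Proof.
move=> /cvgrPdist_lt hv; apply/ccvgP => e /hv [M _ hM].
by exists M => n /hM; rewrite distrC -rmorphB normr_real_complex ltcR.
Qed.

Lemma normc_ge_Im (z : R[i]) : `|complex.Im z|%:C <= `|z|.
Proof. by rewrite -normrN -ReiNIm -[`|z|]mulr1 -(normCi R[i]) -normrM normc_ge_Re. Qed.

Lemma cauchy_ccvg u :
  (forall e : R, 0 < e -> exists M, forall m n, (M <= m)%N -> (M <= n)%N ->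
     `|u m - u n| < e%:C) ->
  exists l, u @ \oo --> l.
Proof.
move=> hu.
have [r hr] : exists r : R, (fun n => complex.Re (u n)) @ \oo --> r.
  apply: cauchy_real_cvg => e /hu [M hM]; exists M => m n hm hn.
  by rewrite -ltcR -raddfB /=; apply: le_lt_trans (normc_ge_Re _) (hM _ _ hm hn).
have [t ht] : exists t : R, (fun n => complex.Im (u n)) @ \oo --> t.
  apply: cauchy_real_cvg => e /hu [M hM]; exists M => m n hm hn.
  by rewrite -ltcR -raddfB /=; apply: le_lt_trans (normc_ge_Im _) (hM _ _ hm hn).
exists (r%:C + 'i%C * t%:C).
rewrite (eq_cvg _ _ (fun n => complexE (u n))).
apply: cvgD; last apply: cvgM; [|exact: cvg_cst|]; exact: cvg_real_complex.
Qed.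

End ComplexLimits.

Section Involution.
Variables (R : realType) (A : algType R[i]) (s : A -> A).
Hypothesis hs : is_involution s.

Lemma starK : involutive s.
Proof. by case: hs. Qed.

Lemma starD x y : s (x + y) = s x + s y.
Proof. by case: hs. Qed.

Lemma starZ c x : s (c *: x) = c^* *: s x.
Proof. by case: hs. Qed.

Lemma starM x y : s (x * y) = s y * s x.
Proof. by case: hs. Qed.

Lemma starN x : s (- x) = - s x.
Proof. by rewrite -scaleN1r starZ rmorphN1 scaleN1r. Qed.

Lemma starB x y : s (x - y) = s x - s y.
Proof. by rewrite starD starN. Qed.

Lemma star0 : s 0 = 0.
Proof. by rewrite -(subrr (0 : A)) starB !subrr. Qed.

Lemma star1 : s 1 = 1.
Proof. by rewrite -[s 1]mulr1 -{2}(starK 1) -starM mulr1 starK. Qed.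

End Involution.

Lemma Cstar_norm_star (R : realType) (A : algType R[i]) (s : A -> A) (N0 : A -> R) :
  is_unital_Cstar s N0 -> forall x, N0 (s x) = N0 x.
Proof.
case=> hs [N0_ge0 _ _ _] N0M N0_Cstar _.
suff N0_star_le y : N0 y <= N0 (s y).
  by move=> x; apply/eqP; rewrite eq_le N0_star_le -{2}(starK hs x) N0_star_le.
have := N0M (s y) y; rewrite N0_Cstar expr2.
have := N0_ge0 y; have := N0_ge0 (s y); nra.
Qed.

Section CQstarNorms.
Variables (R : realType) (A : algType R[i]) (s : A -> A) (N0 N : A -> R).
Hypothesis hCQ : CQstar s N0 N.

Lemma CQ_involution : is_involution s.
Proof. by case: hCQ => -[]. Qed.

Lemma CQnormMl x y : N (x * y) <= N0 x * N y.
Proof.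
case: hCQ => hC _ _ NMr N_star.
rewrite -N_star (starM CQ_involution) mulrC -(N_star y) -(Cstar_norm_star hC x).
exact: NMr.
Qed.

Lemma CQnorm_sandwich x y z : N (x * y * z) <= N0 x * N y * N0 z.
Proof.
case: hCQ => -[_ [N0_ge0 _ _ _] _ _ _] _ _ NMr _.
by apply: le_trans (NMr _ _) _; rewrite ler_wpM2r // CQnormMl.
Qed.

End CQstarNorms.

Section State.
Variables (R : realType) (A : algType R[i]) (s : A -> A) (N : A -> R).
Variable om : A -> R[i].
Hypotheses (hs : is_involution s) (hE : in_E s N om).

Lemma omDZ c x y : om (c *: x + y) = c * om x + om y.
Proof. by case: hE. Qed.

Lemma om_ge0 x : 0 <= om (s x * x).
Proof. by case: hE. Qed.

Lemma om1 : om 1 = 1.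
Proof. by case: hE. Qed.

Lemma omD x y : om (x + y) = om x + om y.
Proof. by rewrite -{1}[x]scale1r omDZ mul1r. Qed.

Lemma om0 : om 0 = 0.
Proof. by apply: (addIr (om 0)); rewrite -omD !add0r. Qed.

Lemma omZ c x : om (c *: x) = c * om x.
Proof. by rewrite -[c *: x]addr0 omDZ om0 addr0. Qed.

Lemma omN x : om (- x) = - om x.
Proof. by rewrite -scaleN1r omZ mulN1r. Qed.

Lemma omB x y : om (x - y) = om x - om y.
Proof. by rewrite omD omN. Qed.

Lemma om_herm x y : om (s y * x) = (om (s x * y))^*.
Proof.
(* Polarization: the cross terms are real; use them for (x, y) and (x, i y). *)
have cross_real z w : (om (s z * w) + om (s w * z))^* = om (s z * w) + om (s w * z).
  have sq_real v : (om (s v * v))^* = om (s v * v) := geC0_conj (om_ge0 v).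
  have -> : om (s z * w) + om (s w * z) =
      om (s (z + w) * (z + w)) - om (s z * z) - om (s w * w).
    by rewrite (starD hs) mulrDl !mulrDr !omD; ring.
  by rewrite !rmorphB /= !sq_real.
have := cross_real x ('i *: y); have := cross_real x y.
rewrite (starZ hs) -scalerAr -scalerAl !omZ conjCi.
move: (om (s x * y)) (om (s y * x)) => P Q sum_real.
rewrite mulNr -mulrBr => diff_real.
have ii := sqrCi R[i].
have eP : P *+ 2 = (P + Q) - 'i * ('i * (P - Q)) by ring: ii.
have eQ : Q *+ 2 = (P + Q) + 'i * ('i * (P - Q)) by ring: ii.
apply: (@pmulrnI _ 2) => //=.
by rewrite eQ -rmorphMn eP rmorphB rmorphM /= diff_real sum_real conjCi mulNr opprK.
Qed.

Lemma om_star x : om (s x) = (om x)^*.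
Proof. by have := om_herm 1 x; rewrite mulr1 (star1 hs) mul1r. Qed.

Lemma om_null_orth Z W : om (s Z * Z) = 0 -> om (s Z * W) = 0.
Proof.
move=> hZ.
have expand t : om (s (W - (t * om (s Z * W)) *: Z) * (W - (t * om (s Z * W)) *: Z)) =
    om (s W * W) - (t + t^*) * `|om (s Z * W)| ^+ 2.
  rewrite (starB hs) (starZ hs) mulrBl !mulrBr -!scalerAl -!scalerAr scalerA.
  by rewrite !omB !omZ hZ [om (s W * Z)]om_herm normCK rmorphM /=; ring.
move: expand; set p := om (s Z * W); set c := om (s W * W) => expand.
apply/eqP/negPn/negP => p_neq0.
have p_gt0 : 0 < `|p| ^+ 2 by rewrite exprn_gt0 ?normr_gt0.
have c_ge0 : 0 <= c := om_ge0 W.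
(* For this real t, [expand t] equals c - (c + 1) = -1. *)
pose t := (c + 1) / (`|p| ^+ 2 *+ 2).
have t_real : t^* = t.
  by apply/geC0_conj/divr_ge0; [rewrite addr_ge0 ?ler01 | apply/mulrn_wge0/ltW].
have := om_ge0 (W - (t * p) *: Z); rewrite expand t_real.
have -> : c - (t + t) * `|p| ^+ 2 = -1.
  by rewrite /t; move: (`|p| ^+ 2) (lt0r_neq0 p_gt0) => q q_neq0; field.
by rewrite ler0N1.
Qed.

Lemma om_shift_expand X mu Z :
  om (s (X - mu *: 1) * (Z * (X - mu *: 1))) =
  om (s X * (Z * X)) - mu * om (s X * Z) - mu^* * om (Z * X) + mu^* * mu * om Z.
Proof.
have -> : s (X - mu *: 1) * (Z * (X - mu *: 1)) =
    s X * (Z * X) - mu *: (s X * Z) - (mu^* *: (Z * X) - (mu^* * mu) *: Z).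
  rewrite (starB hs) (starZ hs) (star1 hs) !mulrBl !mulrBr -!scalerAl -!scalerAr.
  by rewrite !mul1r !mulr1 scalerA.
by rewrite !omB !omZ; ring.
Qed.

Lemma om_center_sq X :
  om (s (X - om X *: 1) * (X - om X *: 1)) = om (s X * X) - `|om X| ^+ 2.
Proof.
have := om_shift_expand X (om X) 1.
by rewrite !mul1r !mulr1 om1 om_star normCK => ->; ring.
Qed.

End State.

Section NondegenerateKernel.
Variables (R : realType) (A : algType R[i]) (s : A -> A) (N : A -> R).
Variables (om : A -> R[i]) (Hs : nat -> A) (a : R[i]).
Hypotheses (hs : is_involution s) (hE : in_E s N om).
Hypothesis hnd : gs_nondegenerate s om Hs a.

Lemma ker_perp_om0 X : in_ker_perp s om Hs a X -> om X = 0.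
Proof.
move=> /(_ 1) perp; rewrite -[X]mul1r -(star1 hs); apply: perp; apply/hnd.
by exists 1; rewrite /lam_eq scale1r subrr (star0 hs) mul0r (om0 hE).
Qed.

Lemma center_in_ker_perp X : in_ker_perp s om Hs a (X - om X *: 1).
Proof.
move=> B /hnd [c null_Bc]; rewrite -[B](subrK (c *: 1)) (starD hs) mulrDl.
rewrite (omD hE) (om_null_orth hs hE _ null_Bc) (starZ hs) (star1 hs) -scalerAl.
by rewrite mul1r (omZ hE) (omB hE) (omZ hE) (om1 hE) mulr1 subrr mulr0 add0r.
Qed.

End NondegenerateKernel.

Section BoundedFunctional.
Variables (R : realType) (V : zmodType) (N : V -> R) (f : V -> R[i]) (C : R).
Hypotheses (C_gt0 : 0 < C) (f_bounded : forall x, `|f x| <= (C * N x)%:C).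

Lemma bounded_lt x e : N x < e / C -> `|f x| < e%:C.
Proof.
by move=> hx; apply: le_lt_trans (f_bounded x) _; rewrite ltcR mulrC -ltr_pdivlMr.
Qed.

Lemma bounded_cauchy_cvg u : {morph f : x y / x - y} -> cauchy_seq N u ->
  exists l : R[i], (fun n => f (u n)) @ \oo --> l.
Proof.
move=> fB hu; apply: cauchy_ccvg => e e_gt0.
have [M hM] := hu _ (divr_gt0 e_gt0 C_gt0).
by exists M => m n hm hn; rewrite -fB; apply: bounded_lt; apply: hM.
Qed.

Lemma bounded_cvg0 u : cvg_seq N u 0 -> (fun n => f (u n)) @ \oo --> 0.
Proof.
move=> hu; apply/ccvgP => e e_gt0.
have [M hM] := hu _ (divr_gt0 e_gt0 C_gt0).
by exists M => n /hM; rewrite !subr0; apply: bounded_lt.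
Qed.

End BoundedFunctional.

Section Hamiltonian.
Variables (R : realType) (A : algType R[i]) (s : A -> A) (N0 N : A -> R).
Variables (om : A -> R[i]) (Hs : nat -> A).
Hypotheses (hCQ : CQstar s N0 N) (hE : in_E s N om).
Hypotheses (hH : cauchy_seq N Hs) (hHsa : selfadj s N Hs).

Let hs := CQ_involution hCQ.

Lemma om_sandwich_bounded P Q :
  exists2 C : R, 0 < C & forall x, `|om (P * (x * Q))| <= (C * N x)%:C.
Proof.
case: hE => _ _ _ [g [g_gt0 om_bound]].
case: hCQ => -[_ [N0_ge0 _ _ _] _ _ _] [N_ge0 _ _ _] _ _ _.
have [N0P_ge0 N0Q_ge0] := (N0_ge0 P, N0_ge0 Q).
exists (g * ((N0 P + 1) * (N0 Q + 1))) => [|x].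
  by rewrite mulr_gt0 // mulr_gt0 // ltr_wpDl.
apply: le_trans (om_bound _) _; rewrite lecR -mulrA.
apply: ler_wpM2l; first exact: ltW.
rewrite mulrA; apply: le_trans (CQnorm_sandwich hCQ _ _ _) _.
have := N_ge0 x; nra.
Qed.

Lemma om_sandwich_cvg P Q :
  exists l : R[i], (fun n => om (P * (Hs n * Q))) @ \oo --> l.
Proof.
have [C C_gt0 hC] := om_sandwich_bounded P Q.
apply: (bounded_cauchy_cvg C_gt0 hC _ hH) => x y.
by rewrite -(omB hE) mulrBl mulrBr.
Qed.

Lemma cvg_om_mulHstar_sub P :
  (fun n => om (P * s (Hs n)) - om (P * Hs n)) @ \oo --> 0.
Proof.
have [C C_gt0 hC] := om_sandwich_bounded P 1.
under eq_cvg do rewrite -(omB hE) -mulrBr -[_ - Hs _]mulr1.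
exact: bounded_cvg0 C_gt0 hC _ hHsa.
Qed.

Variable a : R[i].
Hypothesis hgs : ground_state s om Hs a.

Lemma obar_sandwich P Q :
  (fun n => om (P * (Hs n * Q))) @ \oo --> obar om (fun n => P * (Hs n * Q)).
Proof. by have [l hl] := om_sandwich_cvg P Q; rewrite (obarE hl). Qed.

Lemma cvg_om_mulH X : (fun n => om (X * Hs n)) @ \oo --> a * om X.
Proof.
have [l hl] : exists l : R[i], (fun n => om (X * Hs n)) @ \oo --> l.
  have [l hl] := om_sandwich_cvg X 1.
  by exists l; under eq_cvg do rewrite -[Hs _]mulr1.
by case: hgs => /(_ X) <- _; rewrite (obarE hl).
Qed.

Lemma cvg_om_mulHstar X : (fun n => om (X * s (Hs n))) @ \oo --> a * om X.
Proof.
under eq_cvg => n do rewrite -[om (X * s _)](subrK (om (X * Hs n))) addrC.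
rewrite -[a * om X]addr0.
by apply: cvgD; [exact: cvg_om_mulH | exact: cvg_om_mulHstar_sub].
Qed.

Lemma cvg_om_Hmul X : (fun n => om (Hs n * X)) @ \oo --> a^* * om X.
Proof.
under eq_cvg do rewrite -[Hs _](starK hs) (om_herm hs hE).
by rewrite -[om X]conjCK -(om_star hs hE) -rmorphM; apply/cvg_conjC/cvg_om_mulHstar.
Qed.

Lemma cvg_om_H : (fun n => om (Hs n)) @ \oo --> a.
Proof.
by rewrite -[a]mulr1 -(om1 hE); under eq_cvg do rewrite -[Hs _]mul1r; apply: cvg_om_mulH.
Qed.

Lemma ground_energy_real : a^* = a.
Proof.
have hconj : (fun n => om (Hs n)) @ \oo --> a^*.
  rewrite -[a^*]mulr1 -(om1 hE).
  by under eq_cvg do rewrite -[Hs _]mulr1; apply: cvg_om_Hmul.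
exact: cvg_unique hconj cvg_om_H.
Qed.

Lemma obar_deltaH X :
  - 'i * obar om (fun n => s X * deltaH Hs X n) =
  obar om (fun n => s X * (Hs n * X)) - a * om (s X * X).
Proof.
have hl : (fun n => om (s X * deltaH Hs X n)) @ \oo -->
    'i * (obar om (fun n => s X * (Hs n * X)) - a * om (s X * X)).
  under eq_cvg do rewrite /deltaH -scalerAr (omZ hE) mulrBr (omB hE) [s X * (X * _)]mulrA.
  apply: cvgM; first exact: cvg_cst.
  by apply: cvgB; [exact: obar_sandwich | exact: cvg_om_mulH].
by rewrite (obarE hl) mulrA mulNr -expr2 sqrCi opprK mul1r.
Qed.

Lemma obar_center X :
  obar om (fun n => s (X - om X *: 1) * (Hs n * (X - om X *: 1))) =
  obar om (fun n => s X * (Hs n * X)) - a * `|om X| ^+ 2.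
Proof.
have hl : (fun n => om (s (X - om X *: 1) * (Hs n * (X - om X *: 1)))) @ \oo -->
    obar om (fun n => s X * (Hs n * X)) - om X * (a * om (s X))
    - (om X)^* * (a^* * om X) + (om X)^* * om X * a.
  under eq_cvg do rewrite (om_shift_expand hs hE).
  apply: cvgD; last by apply: cvgM; [exact: cvg_cst | exact: cvg_om_H].
  apply: cvgB; last by apply: cvgM; [exact: cvg_cst | exact: cvg_om_Hmul].
  apply: cvgB; first exact: obar_sandwich.
  by apply: cvgM; [exact: cvg_cst | exact: cvg_om_mulH].
by rewrite (obarE hl) (om_star hs hE) ground_energy_real normCK; ring.
Qed.

End Hamiltonian.

Lemma gap_ineqE (K : numDomainType) (a d w q L : K) :
  ((a + d) * (w - q) <= L - a * q) = (d * (w - q) <= L - a * w).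
Proof. by rewrite -subr_ge0 -[RHS]subr_ge0; congr (0 <= _); ring. Qed.

Theorem theorem5p10 (R : realType) (A : algType R[i]) (s : A -> A)
  (N0 N : A -> R) (Hs : nat -> A) (om : A -> R[i]) (a : R[i]) :
  CQstar s N0 N ->
  cauchy_seq N Hs -> selfadj s N Hs ->
  in_E s N om ->
  ground_state s om Hs a -> gs_nondegenerate s om Hs a ->
  (gapped s om Hs a <->
   exists D : R, 0 < D /\ forall X : A,
     D%:C * (om (s X * X) - `|om X| ^+ 2)
       <= - 'i * obar om (fun n => s X * deltaH Hs X n)).
Proof.
move=> hCQ hH hHsa hE hgs hnd.
have hs := CQ_involution hCQ.
have deltaH_form := obar_deltaH hCQ hE hH hgs.
split=> -[D [D_gt0 gap]]; exists D; split=> // X.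
- have := gap _ (center_in_ker_perp hs hE hnd X).
  by rewrite (om_center_sq hs hE) (obar_center hCQ hE hH hHsa hgs) deltaH_form gap_ineqE.
- move=> /(ker_perp_om0 hs hE hnd) omX0.
  have := gap X; rewrite deltaH_form omX0 normr0 expr0n /= -gap_ineqE.
  by rewrite !subr0 mulr0 subr0.
Qed.
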